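(* Let $\mathbf{F}$ be a finite field with $q$ elements, $n\ge1$, and $V_j=\operatorname{span}(b_1,\dots,b_j)\subseteq\mathbf{F}^n$ for the standard basis $b_1,\dots,b_n$. Let $T\colon V_{n-1}\to V_n$ be a semi-idempotent partial linear map with domain $V_{n-1}$ such that $\operatorname{im}T\not\subset V_{n-1}$, and let $r\ge0$. Then for every function $f\colon\mathbf{Z}_{\ge0}\to\mathbf{Z}$, \[ \sum_{\substack{S\colon V_n\to V_n\ \text{semi-idempotent}\\ \operatorname{rank} S\le r,\ S|_{V_{n-1}}=T}}\mu(\mathrm{srk}\,S)\,f(\operatorname{rank} S)=0. \]
   Context: A partial linear map on $V$ is a linear map $T\colon W\to V$ from a subspace $W$; composition of partial maps $T\circ S$ has domain $S^{-1}(\operatorname{dom}T)$; $T^0=\mathrm{id}$. A partial linear map $T$ is semi-idempotent if for some $N\ge0$, $T$ acts as the identity on $\operatorname{im}T^N$; for an operator $S\colon V\to V$ this is equivalent to $V=X\oplus Y$ with $S|_X=\mathrm{id}$, $S|_Y$ nilpotent, $X,Y$ $S$-stable. $\mathrm{srk}$ denotes the stable rank: $\dim\operatorname{im}T^j$ for $j\gg0$. $\mu(i)=(-1)^iq^{\binom i2}$. *)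

From HB Require Import structures.
From mathcomp Require Import all_boot all_order all_algebra.
From mathcomp Require Import boolp.
Set Implicit Arguments. Unset Strict Implicit. Unset Printing Implicit Defensive.
Import Order.TTheory GRing.Theory Num.Theory.
Local Open Scope ring_scope.

(* Vectors of F^n are row vectors 'rV[F]_n; a linear map acts on the right:
   x |-> x *m A.  A partial linear map with domain the row space of D is
   represented by any matrix A (only its values on D matter; every linear map
   from a subspace extends to the whole space). *)

Section Defs.
Variable F : fieldType.
Variable n : nat.

(* V_j = span(b_1,...,b_j), as (the row space of) a diagonal 0/1 matrix *)
Definition Vsp (j : nat) : 'M[F]_n :=
  \matrix_(i, k) ((i == k) && (i < j)%N)%:R.

(* x lies in the domain of the partial composite T^N, where T = (D, A):
   x, xA, ..., xA^(N-1) all lie in D  (T^0 = id has full domain). *)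
Definition in_dom_iter (D A : 'M[F]_n) (N : nat) (x : 'rV[F]_n) : bool :=
  [forall k : 'I_N, (x *m A ^+ k <= D)%MS].

(* T = (D, A) is semi-idempotent: for some N, T acts as the identity on
   im T^N (i.e. im T^N lies in dom T and T y = y there). *)
Definition semi_idempotent (D A : 'M[F]_n) : Prop :=
  exists N : nat, forall x : 'rV[F]_n, in_dom_iter D A N x ->
    ((x *m A ^+ N <= D)%MS /\ (x *m A ^+ N) *m A = x *m A ^+ N).

(* stable rank of an operator: dim im S^j for j >> 0; the ranks of S^j
   stabilize from j = n on (Fitting), so we take j = n. *)
Definition srk (S : 'M[F]_n) : nat := \rank (S ^+ n).
End Defs.

Definition mu (q i : nat) : int := (-1) ^+ i * (q ^ 'C(i, 2))%:Z.

From HB Require Import structures.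
From mathcomp Require Import all_boot all_order all_algebra.
From mathcomp Require Import boolp.
From mathcomp Require Import zify.
Import Order.TTheory GRing.Theory Num.Theory.
Local Open Scope ring_scope.
Set Implicit Arguments. Unset Strict Implicit. Unset Printing Implicit Defensive.

(* Let [W = V_(n-1)] and let [c0, c0 T, ..., ce = c0 T^e] be a longest
   chain that stays in [W] before leaving it, normalized by [lastc ce = 1].
   An extension [S] of [T] is determined by [t = ce S], and
   [V = Z (+) span (c0 T^i)] where [Z] is the largest [T]-stable subspace of
   [W].  Following the orbit of [ce] under [S] shows that [S] is
   semi-idempotent iff [t \in Z] or [t = ce + z - z T] with [z \in Z]; its
   fixed space is then [Fix T], resp. [Fix T (+) F (ce + z)], so its stable
   rank is [s], resp. [s + 1], where [q ^ s = #|Fix T|].  The map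
   [z |-> ce + z - z T] is [q ^ s]-to-one on [Z] and preserves [rank S], so
   the terms of the sum cancel in groups by [mu s * q ^ s + mu (s + 1) = 0]. *)

Section PowerStabilization.
Variable F : fieldType.

Definition pow_stationary n (S : 'M[F]_n) := exists M, S ^+ M.+1 = S ^+ M.

Lemma expr_fixed_row n (S : 'M[F]_n) (x : 'rV[F]_n) k :
  x *m S = x -> x *m S ^+ k = x.
Proof.
move=> Sx; elim: k => [|k IHk]; first by rewrite expr0 mulmx1.
by rewrite exprSr -mulmxE mulmxA IHk Sx.
Qed.

Lemma eqmx_expr_stable n (S : 'M[F]_n) j :
  \rank (S ^+ j.+1) = \rank (S ^+ j) -> forall k, (S ^+ (j + k) :=: S ^+ j)%MS.
Proof.
move=> rkS.
have eqS : (S ^+ j.+1 :=: S ^+ j)%MS.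
  apply/eqmxP; rewrite -mxrank_leqif_eq; first by rewrite rkS.
  by rewrite exprS -mulmxE submxMl.
elim=> [|k IHk]; first by rewrite addn0.
rewrite addnS exprSr -mulmxE; apply: eqmx_trans eqS.
by rewrite exprSr -mulmxE; apply: eqmxMr.
Qed.

(* The ranks of the powers decrease strictly until they stabilize, so they
   stabilize by the exponent [n]. *)
Lemma mxrank_expr_stable_dim n (S : 'M[F]_n) :
  exists2 j, (j <= n)%N & \rank (S ^+ j.+1) = \rank (S ^+ j).
Proof.
have rk_dec j : (\rank (S ^+ j) + j <= n)%N \/
    exists2 i, (i < j)%N & \rank (S ^+ i.+1) = \rank (S ^+ i).
  elim: j => [|j [IHj|[i ltij rkSi]]].
  - by left; rewrite expr0 mxrank1 addn0.
  - have rkS_le : (\rank (S ^+ j.+1) <= \rank (S ^+ j))%N.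
      by rewrite exprSr -mulmxE mxrankM_maxl.
    case: (ltnP (\rank (S ^+ j.+1)) (\rank (S ^+ j))) => rkS_lt.
      by left; rewrite addnS; apply: leq_trans IHj; rewrite ltn_add2r.
    by right; exists j => //; apply/eqP; rewrite eqn_leq rkS_le.
  - by right; exists i => //; apply: ltnW.
case: (rk_dec n.+1) => [|[i ltin rkSi]]; last by exists i.
by rewrite addnS ltnNge leq_addl.
Qed.

Lemma expr_stationary n (S : 'M[F]_n) M k :
  S ^+ M.+1 = S ^+ M -> (M <= k)%N -> S ^+ k.+1 = S ^+ k.
Proof.
move=> SM leMk; rewrite -(subnKC leMk).
by elim: (k - M)%N => [|d IHd]; rewrite ?addn0 // addnS exprS IHd -exprS.
Qed.

Lemma pow_stationary_dim n (S : 'M[F]_n) :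
  pow_stationary S -> S ^+ n.+1 = S ^+ n.
Proof.
case=> M SM; have [j le_jn rkS] := mxrank_expr_stable_dim S.
have eqSn := eqmx_expr_stable rkS (n - j); rewrite subnKC // in eqSn.
have eqSnM := eqmx_expr_stable rkS (n - j + M); rewrite addnA subnKC // in eqSnM.
have /submxP [X defSn] : (S ^+ n <= S ^+ (n + M))%MS by rewrite eqSn eqSnM.
by rewrite exprSr defSn -mulmxE -mulmxA mulmxE -exprSr (expr_stationary SM) ?leq_addl.
Qed.

Lemma fixed_row_pow_stationary n (S : 'M[F]_n) (x : 'rV[F]_n) :
  pow_stationary S -> (x *m S == x) = (x <= S ^+ n)%MS.
Proof.
move=> /pow_stationary_dim Sn; apply/eqP/idP => [Sx|/submxP [y ->]].
  by rewrite -(expr_fixed_row n Sx) submxMl.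
by rewrite -mulmxA mulmxE -exprSr Sn.
Qed.

Lemma semi_idempotent1P n (S : 'M[F]_n) :
  semi_idempotent 1%:M S <-> pow_stationary S.
Proof.
split=> [[M SM]|[M SM]]; exists M.
  apply/row_matrixP => i; rewrite !rowE.
  have dom_x : in_dom_iter 1%:M S M (delta_mx 0 i) by apply/forallP => k; apply: submx1.
  by case: (SM _ dom_x) => _; rewrite exprSr -mulmxE mulmxA.
by move=> x _; rewrite submx1 -mulmxA mulmxE -exprSr SM.
Qed.

End PowerStabilization.

Lemma card_row_space (F : finFieldType) m n (A : 'M[F]_(m, n)) :
  #|[set x : 'rV[F]_n | (x <= A)%MS]| = (#|F| ^ \rank A)%N.
Proof.
have -> : [set x : 'rV[F]_n | (x <= A)%MS] =
          [set y *m row_base A | y : 'rV[F]_(\rank A)].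
  apply/setP => x; rewrite inE; apply/idP/imsetP.
    by rewrite -(eq_row_base A) => /submxP [y ->]; exists y.
  by case=> y _ ->; rewrite -(eq_row_base A) submxMl.
rewrite card_imset; first by rewrite card_mx mul1n.
have /row_freeP [B baseB] := row_base_free A.
by move=> y1 y2 eqy; rewrite -[y1]mulmx1 -baseB mulmxA eqy -mulmxA baseB mulmx1.
Qed.

Lemma mu_recurrence q k : mu q k * (q ^ k)%:Z + mu q k.+1 = 0.
Proof.
by rewrite /mu binS bin1 expnD PoszM exprS mulN1r mulNr -!mulrA addrN.
Qed.

(* A linear recurrence of order [e.+1] whose solution is eventually constant
   and starts with [e] zeros cannot involve the first [e] coefficients: the
   differences [u k.+1 - u k] satisfy the same recurrence and vanish from
   some point on, so a first nonzero coefficient [lam j] would force them to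
   vanish from [j] on, in particular at [e.-1]. *)
Lemma recurrence_low_coef_eq0 (R : idomainType) (u lam : nat -> R) (e M : nat) :
    (forall k, (k < e)%N -> u k = 0) -> u e != 0 ->
    (forall k, u (e.+1 + k)%N = \sum_(i < e.+1) lam i * u (i + k)%N) ->
    (forall k, (M <= k)%N -> u k.+1 = u k) ->
  forall i, (i < e)%N -> lam i = 0.
Proof.
move=> u_low u_e u_rec u_stat i0 lti0e; apply/eqP/negPn/negP => lam_i0.
have [|j /andP [ltje lam_j] j_min] := ex_minnP (P := fun i => (i < e)%N && (lam i != 0)).
  by exists i0; rewrite lti0e.
have lam_low i : (i < j)%N -> lam i = 0.
  move=> ltij; apply/eqP/negPn/negP => lam_i.
  by have := j_min i; rewrite lam_i (ltn_trans ltij ltje) leqNgt ltij => /(_ isT).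
pose v k := u k.+1 - u k.
have v_rec k : v (e.+1 + k)%N = \sum_(i < e.+1) lam i * v (i + k)%N.
  by rewrite /v -addnS !u_rec -sumrB; apply: eq_bigr => i _; rewrite addnS mulrBr.
have v_eq0 d k : (j <= k)%N -> (M <= k + d)%N -> v k = 0.
  elim: d k => [|d IHd] k lejk leMk; first by rewrite /v u_stat ?subrr // -(addn0 k).
  have := v_rec (k - j)%N; rewrite (bigD1 (Ordinal (leqW ltje))) //= big1 ?addr0.
    rewrite subnKC // IHd; try lia.
    by move/esym/eqP; rewrite mulf_eq0 (negbTE lam_j) => /eqP.
  move=> i neq_ij; case: (ltngtP i j) => [ltij|ltji|eqij]; last first.
  - by move: neq_ij; rewrite -val_eqE /= eqij eqxx.
  - by rewrite (IHd (i + (k - j))%N) ?mulr0 //; lia.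
  by rewrite lam_low // mul0r.
have e_gt0 : (0 < e)%N by apply: leq_ltn_trans ltje.
have : v e.-1 = 0 by apply: (v_eq0 M); lia.
rewrite /v prednK // (u_low e.-1) ?subr0; last by lia.
by move/eqP; rewrite (negbTE u_e).
Qed.

Section Hyperplane.
Variables (F : fieldType) (n' : nat).
Local Notation n := n'.+1.
Local Notation W := (Vsp F n n').

Definition lastc (x : 'rV[F]_n) : F := x 0 ord_max.

Fact lastc_is_semilinear : semilinear_for *%R lastc.
Proof. by split=> [a x|x y]; rewrite /lastc !mxE. Qed.
HB.instance Definition _ :=
  GRing.isSemilinear.Build F 'rV[F]_n F _ lastc lastc_is_semilinear.

Lemma Vsp_diag (i : 'I_n) : W i i = (i != ord_max)%:R.
Proof.
rewrite mxE eqxx -val_eqE /= neq_ltn [(n' < i)%N]ltnNge.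
by rewrite -[(i <= n')%N]/(i < n)%N ltn_ord orbF.
Qed.

Lemma mul_Vsp (x : 'rV[F]_n) : lastc x = 0 -> x *m W = x.
Proof.
move=> x_n; apply/rowP => j; rewrite !mxE (bigD1 j) //= big1 ?addr0.
  rewrite Vsp_diag; case: eqP => [->|_]; last by rewrite mulr1.
  by rewrite mulr0 -x_n.
by move=> i /negbTE neq_ij; rewrite mxE neq_ij mulr0.
Qed.

Lemma lastc_mul_Vsp (x : 'rV[F]_n) : lastc (x *m W) = 0.
Proof.
rewrite /lastc mxE big1 // => i _; rewrite mxE.
by case: eqP => [->|_]; rewrite ?ltnn ?andbF ?mulr0.
Qed.

Lemma submx_Vsp (x : 'rV[F]_n) : (x <= W)%MS = (lastc x == 0).
Proof.
apply/idP/eqP => [/submxP [y ->]|x_n]; first exact: lastc_mul_Vsp.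
by rewrite -(mul_Vsp x_n) submxMl.
Qed.

Variable A : 'M[F]_n.
Local Notation dom := (in_dom_iter W A).

Lemma in_dom_iterP j x :
  reflect (forall k, (k < j)%N -> lastc (x *m A ^+ k) = 0) (dom j x).
Proof.
apply: (iffP forallP) => [xA k ltkj|xA k]; last by rewrite submx_Vsp xA.
by apply/eqP; rewrite -submx_Vsp; exact: (xA (Ordinal ltkj)).
Qed.

Lemma in_dom_iter0 x : dom 0 x.
Proof. by apply/in_dom_iterP. Qed.

Lemma in_dom_iterS j x : dom j.+1 x = dom j x && (lastc (x *m A ^+ j) == 0).
Proof.
apply/in_dom_iterP/andP => [xA|[/in_dom_iterP xA /eqP xAj] k].
  by split; [apply/in_dom_iterP => k ltkj; apply: xA; apply: ltnW|apply/eqP/xA].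
by rewrite ltnS leq_eqVlt => /orP [/eqP ->|]; [|apply: xA].
Qed.

Lemma in_dom_iterSl j x : dom j.+1 x = (lastc x == 0) && dom j (x *m A).
Proof.
apply/in_dom_iterP/andP => [xA|[/eqP x_n /in_dom_iterP xA] [|k] ltkj].
- split; first by apply/eqP; have := xA 0%N isT; rewrite expr0 mulmx1.
  by apply/in_dom_iterP => k ltkj; rewrite -mulmxA mulmxE -exprS; apply: xA.
- by rewrite expr0 mulmx1.
- by rewrite exprS -mulmxE mulmxA xA.
Qed.

Lemma in_dom_iter_lin j a x y : dom j x -> dom j y -> dom j (a *: x + y).
Proof.
move=> /in_dom_iterP xA /in_dom_iterP yA; apply/in_dom_iterP => k ltkj.
by rewrite mulmxDl -scalemxAl linearP /= xA ?yA ?mulr0 ?addr0.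
Qed.

Lemma in_dom_iter_le i j x : (i <= j)%N -> dom j x -> dom i x.
Proof.
move=> leij /in_dom_iterP xA; apply/in_dom_iterP => k ltki.
exact: xA (leq_trans ltki leij).
Qed.

Definition extends (S : 'M[F]_n) := forall x, lastc x = 0 -> x *m S = x *m A.

Lemma extendsP S : reflect (extends S) (W *m S == W *m A).
Proof.
apply: (iffP eqP) => [WS x x_n|SA]; first by rewrite -(mul_Vsp x_n) -!mulmxA WS.
by apply/row_matrixP => i; rewrite !row_mul SA // rowE lastc_mul_Vsp.
Qed.

(* The last clause makes [e] maximal: no vector stays in [W] for [e.+1]
   steps of [A] and then leaves it. *)
Definition max_chain e (c0 : 'rV[F]_n) := [/\ (0 < e)%N, dom e c0,
  lastc (c0 *m A ^+ e) = 1 & forall y, dom e.+1 y -> lastc (y *m A ^+ e.+1) = 0].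

Lemma exists_max_chain :
  semi_idempotent W A -> ~~ (W *m A <= W)%MS -> exists e c0, max_chain e c0.
Proof.
move=> [N A_si] WA_notin.
pose chain e := `[< exists x, dom e x && (lastc (x *m A ^+ e) != 0) >].
have chain1 : chain 1%N.
  case/row_subPn: WA_notin => i; rewrite row_mul submx_Vsp => xA.
  apply/asboolP; exists (row i W); rewrite expr1 xA andbT in_dom_iterS in_dom_iter0 /=.
  by rewrite expr0 mulmx1 rowE lastc_mul_Vsp.
have chain_le e : chain e -> (e <= N)%N.
  case/asboolP => x /andP [dom_x xAe]; rewrite leqNgt; apply/negP => ltNe.
  have [xAN fixN] := A_si x (in_dom_iter_le (ltnW ltNe) dom_x).
  move: xAe; rewrite -(subnKC (ltnW ltNe)) exprD -mulmxE mulmxA.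
  by rewrite (expr_fixed_row _ fixN) -submx_Vsp xAN.
have [e /asboolP [x /andP [dom_x xAe]] e_max] :=
  ex_maxnP (ex_intro chain 1%N chain1) chain_le.
exists e, ((lastc (x *m A ^+ e))^-1 *: x); split.
- exact: e_max.
- rewrite -[_ *: x]addr0; apply: in_dom_iter_lin => //.
  by apply/in_dom_iterP => k _; rewrite mul0mx linear0.
- by rewrite -scalemxAl linearZ /= mulVf.
move=> y dom_y; apply/eqP/negPn/negP => yA.
have : (e.+1 <= e)%N by apply: e_max; apply/asboolP; exists y; rewrite dom_y.
by rewrite ltnn.
Qed.

End Hyperplane.

Section Extensions.
Variables (F : fieldType) (n' : nat).
Local Notation n := n'.+1.
Local Notation W := (Vsp F n n').
Variables (A : 'M[F]_n) (e : nat) (c0 : 'rV[F]_n).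
Local Notation dom := (in_dom_iter W A).
Hypothesis A_si : semi_idempotent W A.
Hypothesis chain_e : max_chain A e c0.

Let e_gt0 : (0 < e)%N. Proof. by case: chain_e. Qed.
Let c0_dom : dom e c0. Proof. by case: chain_e. Qed.
Let e_max y : dom e.+1 y -> lastc (y *m A ^+ e.+1) = 0.
Proof. by case: chain_e => _ _ _; apply. Qed.

Definition c i := c0 *m A ^+ i.
Local Notation ce := (c e).

Lemma lastc_ce : lastc ce = 1.
Proof. by case: chain_e. Qed.

Lemma lastc_c i : (i < e)%N -> lastc (c i) = 0.
Proof. by move=> ltie; move/in_dom_iterP: c0_dom; apply. Qed.

Lemma c_mul_expr k i : c k *m A ^+ i = c (k + i).
Proof. by rewrite /c -mulmxA mulmxE -exprD. Qed.

Lemma c_mulA i : c i *m A = c i.+1.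
Proof. by rewrite -[A in LHS]expr1 c_mul_expr addn1. Qed.

(* By maximality of [e], a vector staying in [W] for [e.+1] steps of [A]
   stays there forever: [Zsub] is the largest [A]-stable subspace of [W]. *)
Definition Zsub : {pred 'rV[F]_n} := dom e.+1.

Fact Zsub_submod_closed : submod_closed Zsub.
Proof.
split=> [|a x y]; last exact: in_dom_iter_lin.
by apply/in_dom_iterP => k _; rewrite mul0mx linear0.
Qed.
HB.instance Definition _ :=
  GRing.isSubmodClosed.Build F 'rV[F]_n Zsub Zsub_submod_closed.

Lemma mem_Zsub x : (x \in Zsub) = dom e.+1 x.
Proof. by []. Qed.

Lemma lastc_Zsub x : x \in Zsub -> lastc x = 0.
Proof. by rewrite mem_Zsub in_dom_iterSl => /andP [/eqP]. Qed.

Lemma Zsub_mulA x : x \in Zsub -> x *m A \in Zsub.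
Proof.
rewrite !mem_Zsub => Zx; have : dom e.+2 x by rewrite in_dom_iterS Zx e_max ?eqxx.
by rewrite in_dom_iterSl => /andP [].
Qed.

Lemma Zsub_mul_expr x k : x \in Zsub -> x *m A ^+ k \in Zsub.
Proof.
elim: k x => [|k IHk] x Zx; first by rewrite expr0 mulmx1.
by rewrite exprS -mulmxE mulmxA; apply/IHk/Zsub_mulA.
Qed.

Lemma Zsub_fixed_expr : exists N, forall x, x \in Zsub -> x *m A ^+ N *m A = x *m A ^+ N.
Proof.
case: A_si => N A_N; exists N => x Zx.
suff dom_x : dom N x by case: (A_N x dom_x).
by apply/in_dom_iterP => k _; apply/lastc_Zsub/Zsub_mul_expr.
Qed.

(* The extension of [T] mapping [ce] to [t]; since [lastc ce = 1], every
   extension has this form (lemma [extendsE]). *)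
Definition extend (t : 'rV[F]_n) : 'M[F]_n :=
  A + delta_mx ord_max 0 *m (t - ce *m A).

Lemma mul_delta_last (x : 'rV[F]_n) : x *m delta_mx ord_max 0 = (lastc x)%:M.
Proof.
apply/matrixP => i j; rewrite !ord1 !mxE (bigD1 ord_max) //= big1 ?addr0.
  by rewrite !mxE !eqxx mulr1.
by move=> k /negbTE neq_k; rewrite mxE neq_k mulr0.
Qed.

Lemma extend_mul x t : x *m extend t = x *m A + lastc x *: (t - ce *m A).
Proof. by rewrite mulmxDr mulmxA mul_delta_last mul_scalar_mx. Qed.

Lemma extend_mulW x t : lastc x = 0 -> x *m extend t = x *m A.
Proof. by move=> x_n; rewrite extend_mul x_n scale0r addr0. Qed.

Lemma ce_extend t : ce *m extend t = t.
Proof. by rewrite extend_mul lastc_ce scale1r addrC subrK. Qed.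

Lemma Vsp_mul_extend t : W *m extend t == W *m A.
Proof. by apply/extendsP => x x_n; apply: extend_mulW. Qed.

Lemma extendsE S : extends A S -> S = extend (ce *m S).
Proof.
move=> AS; apply/row_matrixP => i; rewrite !rowE.
set x := delta_mx 0 i.
have x_n : lastc (x - lastc x *: ce) = 0 by rewrite linearB linearZ /= lastc_ce mulr1 subrr.
rewrite -[x in LHS](subrK (lastc x *: ce)) mulmxDl AS // extend_mul.
by rewrite mulmxBl -!scalemxAl scalerBr addrAC -addrA.
Qed.

Lemma extend_mul_Zsub x t : x \in Zsub -> x *m extend t = x *m A.
Proof. by move=> Zx; apply/extend_mulW/lastc_Zsub. Qed.

Lemma extend_expr_Zsub x t k : x \in Zsub -> x *m extend t ^+ k = x *m A ^+ k.
Proof.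
move=> Zx; elim: k => [|k IHk]; first by rewrite !expr0.
by rewrite !exprSr -!mulmxE !mulmxA IHk extend_mul_Zsub ?Zsub_mul_expr.
Qed.

Lemma c0_extend_expr t i : (i <= e)%N -> c0 *m extend t ^+ i = c i.
Proof.
elim: i => [|i IHi] leie; first by rewrite !expr0 /c expr0.
by rewrite exprSr -mulmxE mulmxA IHi ?(ltnW leie) // extend_mulW ?lastc_c ?c_mulA.
Qed.

Lemma c0_extend_expr_top t k : c0 *m extend t ^+ (e.+1 + k) = t *m extend t ^+ k.
Proof.
by rewrite exprD -mulmxE mulmxA exprSr -mulmxE mulmxA c0_extend_expr // ce_extend.
Qed.

Lemma c_extend_expr t i k :
  (i <= e)%N -> c i *m extend t ^+ k = c0 *m extend t ^+ (i + k).
Proof. by move=> leie; rewrite -(c0_extend_expr t leie) -mulmxA mulmxE -exprD. Qed.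

Lemma c_extend_expr_top t i : (i <= e)%N -> c i *m extend t ^+ e.+1 = t *m extend t ^+ i.
Proof. by move=> leie; rewrite c_extend_expr // addnC c0_extend_expr_top. Qed.

(* [V = Zsub (+) span (c 0, ..., c e)]; the coefficient of [c i] is
   extracted from [lastc (x *m A ^+ (e - i))]. *)
Lemma decomposition_rec k : (k <= e.+1)%N -> forall x, dom (e.+1 - k) x ->
  exists z (lam : nat -> F), z \in Zsub /\ x = z + \sum_(i < k) lam i *: c i.
Proof.
elim: k => [|k IHk] lekSe x dom_x.
  by exists x, (fun=> 0); rewrite big_ord0 addr0; split; rewrite // mem_Zsub -(subn0 e.+1).
have def_e : (k + (e - k))%N = e by rewrite subnKC.
pose a := lastc (x *m A ^+ (e - k)).
have dom_ck : dom (e - k) (c k).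
  by apply/in_dom_iterP => i ltiek; rewrite c_mul_expr lastc_c // -def_e ltn_add2l.
have dom_x' : dom (e.+1 - k) (x - a *: c k).
  rewrite subSn // in_dom_iterS; apply/andP; split.
    by rewrite addrC -scaleNr; apply: in_dom_iter_lin; rewrite // -subSS.
  by rewrite mulmxBl -scalemxAl linearB linearZ /= c_mul_expr def_e lastc_ce mulr1 subrr.
have [z [lam [Zz def_x]]] := IHk (ltnW lekSe) _ dom_x'.
exists z, (fun i => if i == k then a else lam i); split => //.
rewrite big_ord_recr /= eqxx addrA.
rewrite (eq_bigr (fun i : 'I_k => lam i *: c i)); last first.
  by move=> i _; rewrite (ltn_eqF (ltn_ord i)).
by rewrite -def_x subrK.
Qed.

Lemma decomposition x :
  exists z (lam : nat -> F), z \in Zsub /\ x = z + \sum_(i < e.+1) lam i *: c i.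
Proof. by apply: decomposition_rec => //; rewrite subnn in_dom_iter0. Qed.

Lemma sum_c_extend_top t (lam : nat -> F) :
  (\sum_(i < e.+1) lam i *: c i) *m extend t ^+ e.+1 =
  \sum_(i < e.+1) lam i *: (t *m extend t ^+ i).
Proof.
rewrite mulmx_suml; apply: eq_bigr => i _.
by rewrite -scalemxAl c_extend_expr_top // -ltnS.
Qed.

Lemma extend_expr_top_Zsub t x :
  t \in Zsub -> x *m extend t ^+ e.+1 \in Zsub.
Proof.
move=> Zt; have [z [lam [Zz ->]]] := decomposition x.
rewrite mulmxDl sum_c_extend_top extend_expr_Zsub // rpredD ?Zsub_mul_expr //.
by apply: rpred_sum => i _; rewrite rpredZ // extend_expr_Zsub ?Zsub_mul_expr.
Qed.

Lemma pow_stationary_extend_Zsub t : t \in Zsub -> pow_stationary (extend t).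
Proof.
move=> Zt; have [N Z_N] := Zsub_fixed_expr; exists (e.+1 + N)%N.
apply/row_matrixP => i; rewrite !rowE.
rewrite exprSr -mulmxE mulmxA exprD -mulmxE mulmxA.
have Zy := extend_expr_top_Zsub (delta_mx 0 i) Zt.
by rewrite extend_expr_Zsub // extend_mul_Zsub ?Z_N ?Zsub_mul_expr.
Qed.

Lemma fixed_extend_Zsub t x : t \in Zsub ->
  (x *m extend t == x) = (lastc x == 0) && (x *m A == x).
Proof.
move=> Zt; apply/eqP/andP => [fix_x|[/eqP x_n /eqP Ax]]; last by rewrite extend_mulW.
have Zx : x \in Zsub by rewrite -(expr_fixed_row e.+1 fix_x) extend_expr_top_Zsub.
by split; [rewrite lastc_Zsub | rewrite -{2}fix_x extend_mul_Zsub].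
Qed.

Definition shift z := ce + z - z *m A.

Lemma lastc_shift z : z \in Zsub -> lastc (shift z) = 1.
Proof.
move=> Zz; rewrite /shift linearB linearD /= lastc_ce.
by rewrite (lastc_Zsub Zz) (lastc_Zsub (Zsub_mulA Zz)) addr0 subr0.
Qed.

Lemma extend_shift_fixed z : z \in Zsub -> (ce + z) *m extend (shift z) = ce + z.
Proof. by move=> Zz; rewrite mulmxDl ce_extend extend_mul_Zsub // subrK. Qed.

Lemma extend_expr_top_shift z x : z \in Zsub -> exists y b,
  y \in Zsub /\ x *m extend (shift z) ^+ e.+1 = y + b *: (ce + z).
Proof.
move=> Zz; set S := extend (shift z).
have shift_expr i : shift z *m S ^+ i = ce + z - z *m A ^+ i.+1.
  elim: i => [|i IHi]; first by rewrite expr0 mulmx1 expr1.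
  rewrite exprSr -mulmxE mulmxA IHi mulmxBl extend_shift_fixed //.
  by rewrite extend_mul_Zsub ?Zsub_mul_expr // -mulmxA mulmxE -exprSr.
have [y [lam [Zy ->]]] := decomposition x.
rewrite mulmxDl sum_c_extend_top extend_expr_Zsub //.
under eq_bigr => i _ do rewrite shift_expr scalerBr.
rewrite sumrB -scaler_suml.
exists (y *m A ^+ e.+1 - \sum_(i < e.+1) lam i *: (z *m A ^+ i.+1)).
exists (\sum_(i < e.+1) lam i).
split; last by rewrite addrA addrAC.
rewrite rpredB ?Zsub_mul_expr //.
by apply: rpred_sum => i _; rewrite rpredZ ?Zsub_mul_expr.
Qed.

Lemma pow_stationary_extend_shift z :
  z \in Zsub -> pow_stationary (extend (shift z)).
Proof.
move=> Zz; have [N Z_N] := Zsub_fixed_expr; exists (e.+1 + N)%N.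
apply/row_matrixP => i; rewrite !rowE.
rewrite exprSr -mulmxE mulmxA exprD -mulmxE mulmxA.
have [y [b [Zy ->]]] := extend_expr_top_shift (delta_mx 0 i) Zz.
rewrite !mulmxDl -!scalemxAl (expr_fixed_row _ (extend_shift_fixed Zz)).
by rewrite extend_shift_fixed // extend_expr_Zsub // extend_mul_Zsub ?Z_N ?Zsub_mul_expr.
Qed.

Lemma fixed_extend_shift z x : z \in Zsub ->
  x *m extend (shift z) = x <->
  exists y b, [/\ lastc y = 0, y *m A = y & x = y + b *: (ce + z)].
Proof.
move=> Zz; have fix_w := extend_shift_fixed Zz.
split=> [fix_x|[y [b [y_n Ay ->]]]]; last first.
  by rewrite mulmxDl -scalemxAl fix_w extend_mulW // Ay.
have [y [b [Zy def_x]]] := extend_expr_top_shift x Zz.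
rewrite (expr_fixed_row _ fix_x) in def_x.
exists y, b; split; rewrite ?lastc_Zsub //.
move: fix_x; rewrite def_x mulmxDl -scalemxAl fix_w extend_mul_Zsub //.
by move/addIr.
Qed.

(* The sequence [lastc (c0 *m S ^+ k)] obeys a linear recurrence whose
   coefficients are the [c]-coordinates of [t]; as it starts with [e] zeros
   and is eventually constant, only the coordinate on [ce] survives. *)
Lemma extend_pow_stationary_head t : pow_stationary (extend t) ->
  exists z lam, z \in Zsub /\ t = z + lam *: ce.
Proof.
case=> M SM; set S := extend t.
have [z [lam [Zz def_t]]] := decomposition t.
pose u k := lastc (c0 *m S ^+ k).
have lam_low : forall i, (i < e)%N -> lam i = 0.
  apply: (@recurrence_low_coef_eq0 _ u lam e M).
  - by move=> k ltke; rewrite /u c0_extend_expr ?lastc_c // ltnW.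
  - by rewrite /u c0_extend_expr // lastc_ce oner_neq0.
  - move=> k; rewrite /u c0_extend_expr_top {1}def_t mulmxDl mulmx_suml.
    rewrite linearD linear_sum /=.
    rewrite extend_expr_Zsub // lastc_Zsub ?Zsub_mul_expr // add0r.
    by apply: eq_bigr => i _; rewrite -scalemxAl linearZ c_extend_expr // -ltnS.
  - by move=> k lekM; rewrite /u (expr_stationary SM).
exists z, (lam e); split => //; rewrite {1}def_t big_ord_recr /= big1 ?add0r //.
by move=> i _; rewrite lam_low ?scale0r.
Qed.

Lemma ce_extend_expr z lam k : z \in Zsub ->
  exists2 y, y \in Zsub & ce *m extend (z + lam *: ce) ^+ k = lam ^+ k *: ce + y.
Proof.
move=> Zz; elim: k => [|k [y Zy IHk]].
  by exists 0; rewrite ?rpred0 // !expr0 mulmx1 scale1r addr0.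
exists (lam ^+ k *: z + y *m A); first by rewrite rpredD ?rpredZ ?Zsub_mulA.
rewrite exprSr -mulmxE mulmxA IHk mulmxDl -scalemxAl ce_extend extend_mul_Zsub //.
by rewrite scalerDr scalerA -exprSr addrAC addrC.
Qed.

Lemma ce_extend_expr_shift z k : z \in Zsub ->
  ce *m extend (z + ce) ^+ k = ce + \sum_(i < k) z *m A ^+ i.
Proof.
move=> Zz; elim: k => [|k IHk]; first by rewrite expr0 mulmx1 big_ord0 addr0.
rewrite exprSr -mulmxE mulmxA IHk mulmxDl ce_extend mulmx_suml big_ord_recl /=.
rewrite expr0 mulmx1 [z + ce]addrC -addrA; congr (_ + (_ + _)).
apply: eq_bigr => i _; rewrite extend_mul_Zsub ?Zsub_mul_expr //.
by rewrite -mulmxA mulmxE -exprSr.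
Qed.

Lemma extend_pow_stationary_cases t : pow_stationary (extend t) ->
  t \in Zsub \/ exists2 z, z \in Zsub & t = shift z.
Proof.
move=> Sstat; have [z [lam [Zz def_t]]] := extend_pow_stationary_head Sstat.
case: Sstat => M; rewrite def_t => SM.
have lastc_expr k : lastc (ce *m extend (z + lam *: ce) ^+ k) = lam ^+ k.
  have [y Zy ->] := ce_extend_expr lam k Zz.
  by rewrite linearD linearZ /= lastc_ce mulr1 lastc_Zsub // addr0.
have /eqP : lam ^+ M * (lam - 1) = 0.
  by rewrite mulrBr mulr1 -exprSr -!lastc_expr SM subrr.
rewrite mulf_eq0 expf_eq0 subr_eq0 => /orP [/andP [_ /eqP ->]|/eqP lam1].
  by left; rewrite scale0r addr0.
right; rewrite lam1 scale1r in SM *.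
have zAM : z *m A ^+ M = 0.
  move: (congr1 (mulmx ce) SM); rewrite !ce_extend_expr_shift // big_ord_recr /=.
  by move/addrI/eqP; rewrite addrC -subr_eq0 addrK => /eqP.
exists (\sum_(i < M) z *m A ^+ i); first by apply: rpred_sum => i _; apply: Zsub_mul_expr.
have sumA : (\sum_(i < M) z *m A ^+ i) *m A - \sum_(i < M) z *m A ^+ i = - z.
  rewrite mulmx_suml -sumrB (eq_bigr (fun i : 'I_M => z *m A ^+ i.+1 - z *m A ^+ i)).
    rewrite -(big_mkord predT (fun i => z *m A ^+ i.+1 - z *m A ^+ i)).
    by rewrite telescope_sumr // zAM expr0 mulmx1 sub0r.
  by move=> i _; rewrite -mulmxA mulmxE -exprSr.
by rewrite /shift -addrA -opprB sumA opprK addrC.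
Qed.

(* [extend (shift z)] is [extend z] precomposed with the elementary
   automorphism [1 + delta_mx ord_max 0 *m u], [u = c e.-1 - z]. *)
Lemma mxrank_extend_shift z : z \in Zsub -> \rank (extend (shift z)) = \rank (extend z).
Proof.
move=> Zz; set u := c e.-1 - z.
have u_n : lastc u = 0 by rewrite linearB /= lastc_c ?lastc_Zsub ?subr0 // prednK.
have uS : u *m extend z = ce - z *m A by rewrite extend_mulW // mulmxBl c_mulA prednK.
clearbody u; set P := 1%:M + delta_mx ord_max 0 *m u.
have def_S : extend (shift z) = P *m extend z.
  rewrite mulmxDl mul1mx -mulmxA uS /extend /shift -[RHS]addrA; congr (_ + _).
  rewrite -mulmxDr; congr (_ *m _).
  by rewrite -addrA [in RHS]addrACA (addrC ce) (addrC (- (z *m A))).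
have P_unit : P \in unitmx.
  suff : P *m (1%:M - delta_mx ord_max 0 *m u) = 1%:M by case/mulmx1_unit.
  rewrite mulmxDl mul1mx mulmxBr mulmx1 -mulmxA (mulmxA u) mul_delta_last u_n.
  by rewrite mul_scalar_mx scale0r mulmx0 subr0 subrK.
by rewrite def_S eqmxMfull // row_full_unit.
Qed.

End Extensions.

Definition fixed_rows (F : fieldType) n (S : 'M[F]_n) :=
  [pred x : 'rV[F]_n | x *m S == x].

Lemma card_fixed_rows (F : finFieldType) n (S : 'M[F]_n) :
  pow_stationary S -> #|fixed_rows S| = (#|F| ^ srk S)%N.
Proof.
move=> Sstat; rewrite /srk -card_row_space; apply: eq_card => x.
by rewrite !inE fixed_row_pow_stationary.
Qed.

Section Counting.
Variables (F : finFieldType) (n' : nat).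
Local Notation n := n'.+1.
Local Notation W := (Vsp F n n').
Variables (A : 'M[F]_n) (e : nat) (c0 : 'rV[F]_n).
Hypothesis A_si : semi_idempotent W A.
Hypothesis chain_e : max_chain A e c0.

Local Notation q := #|F|.
Local Notation Zsub := (Zsub A e).
Local Notation extend := (extend A e c0).
Local Notation shift := (shift A e c0).
Local Notation ce := (c A c0 e).

Definition fixedT := [pred x : 'rV[F]_n | (lastc x == 0) && (x *m A == x)].

Lemma fixedT_Zsub x : x \in fixedT -> x \in Zsub.
Proof.
by case/andP => /eqP x_n /eqP Ax; apply/in_dom_iterP => k _; rewrite expr_fixed_row.
Qed.

Lemma card_fixedT : #|fixedT| = (q ^ srk (extend 0))%N.
Proof.
rewrite -card_fixed_rows; last exact: pow_stationary_extend_Zsub A_si chain_e _ (rpred0 _).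
by apply: eq_card => x; rewrite !inE (fixed_extend_Zsub chain_e) ?rpred0.
Qed.

Lemma srk_extend_Zsub t : t \in Zsub -> srk (extend t) = srk (extend 0).
Proof.
move=> Zt; apply: (expnI (card_finNzRing_gt1 F)).
rewrite -card_fixedT -card_fixed_rows.
  by apply: eq_card => x; rewrite !inE (fixed_extend_Zsub chain_e).
exact: pow_stationary_extend_Zsub A_si chain_e _ Zt.
Qed.

Lemma card_fixed_extend_shift z : z \in Zsub ->
  #|fixed_rows (extend (shift z))| = (#|fixedT| * q)%N.
Proof.
move=> Zz; set w := ce + z.
have fixedE : fixed_rows (extend (shift z)) =i
    [set p.1 + p.2 *: w | p in [set p : 'rV[F]_n * F | p.1 \in fixedT]].
  move=> x; rewrite !inE; apply/eqP/imsetP.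
    case/(fixed_extend_shift chain_e x Zz) => y [b [y_n Ay ->]].
    by exists (y, b); rewrite // !inE /= y_n Ay !eqxx.
  case=> [[y b]]; rewrite inE => /andP [/eqP y_n /eqP Ay] ->.
  by apply/(fixed_extend_shift chain_e _ Zz); exists y, b.
rewrite (eq_card fixedE) card_in_imset.
  rewrite -cardsT -(cardsE fixedT) -cardsX.
  by apply: eq_card => -[y b]; rewrite !inE andbT.
move=> [y1 b1] [y2 b2]; rewrite !inE /= => /andP [/eqP y1_n _] /andP [/eqP y2_n _] eq_x.
have eq_b : b1 = b2.
  move: (congr1 (fun v => lastc v) eq_x); rewrite !linearD !linearZ /= y1_n y2_n !add0r.
  by rewrite (lastc_ce chain_e) (lastc_Zsub Zz) !mulr0 !addr0 !mulr1.
by rewrite eq_b in eq_x *; move/addIr: eq_x => ->.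
Qed.

Lemma srk_extend_shift z : z \in Zsub -> srk (extend (shift z)) = (srk (extend 0)).+1.
Proof.
move=> Zz; apply: (expnI (card_finNzRing_gt1 F)).
rewrite -card_fixed_rows ?card_fixed_extend_shift // ?card_fixedT ?expnSr //.
exact: pow_stationary_extend_shift A_si chain_e _ Zz.
Qed.

Lemma card_shift_fiber z1 : z1 \in Zsub ->
  #|[pred z in Zsub | shift z == shift z1]| = #|fixedT|.
Proof.
move=> Zz1.
have fiberE : [pred z in Zsub | shift z == shift z1] =i [set z1 + a | a in fixedT].
  move=> z; rewrite !inE; apply/andP/imsetP => [[Zz /eqP]|[a fix_a ->]].
    rewrite /shift -!addrA => /addrI eq_shift; exists (z - z1); last by rewrite addrC subrK.
    have A_diff : (z - z1) *m A = z - z1.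
      apply/eqP; rewrite eq_sym -subr_eq0.
      have -> : z - z1 - (z - z1) *m A = (z - z *m A) - (z1 - z1 *m A).
        by rewrite mulmxBl !opprB addrACA [in RHS]addrACA [in RHS](addrC (- (z *m A))).
      by rewrite eq_shift subrr.
    by rewrite !inE A_diff (lastc_Zsub (rpredB Zz Zz1)) !eqxx.
  have Za := fixedT_Zsub fix_a; move: fix_a; rewrite inE => /andP [_ /eqP Aa].
  by rewrite rpredD //= /shift mulmxDl Aa addrA opprD addrACA subrr addr0.
by rewrite (eq_card fiberE) card_imset //; apply: addrI.
Qed.

Lemma sum_Zsub_shift (R : nmodType) (g : 'rV[F]_n -> R) :
  \sum_(z in Zsub) g (shift z) = (\sum_(t in [set shift z | z in Zsub]) g t) *+ #|fixedT|.
Proof.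
rewrite (partition_big_imset shift) /= -sumrMnl; apply: eq_bigr => t /imsetP [z1 Zz1 ->].
rewrite (eq_bigr (fun=> g (shift z1))); last by move=> z /andP [_ /eqP ->].
by rewrite sumr_const -(card_shift_fiber Zz1).
Qed.

Lemma pow_stationary_extendP t : reflect (pow_stationary (extend t))
  ((t \in Zsub) || (t \in [set shift z | z in Zsub])).
Proof.
apply: (iffP orP) => [[Zt|/imsetP [z Zz ->]]|].
- exact: pow_stationary_extend_Zsub A_si chain_e _ Zt.
- exact: pow_stationary_extend_shift A_si chain_e _ Zz.
case/(extend_pow_stationary_cases chain_e) => [|[z Zz ->]]; first by left.
by right; apply: imset_f.
Qed.

Lemma sum_extensions_eq0 (r : nat) (f : nat -> int) :
  \sum_(S : 'M[F]_n | [&& (\rank S <= r)%N & W *m S == W *m A]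
                      && `[< semi_idempotent 1%:M S >])
     mu q (srk S) * f (\rank S) = 0.
Proof.
set s := srk (extend 0); set Bsub := [set shift z | z in Zsub].
pose h t := if (\rank (extend t) <= r)%N then f (\rank (extend t)) else 0.
rewrite (reindex_onto extend (fun S => ce *m S)) /=; last first.
  by move=> S /andP [/andP [_ /extendsP AS] _]; rewrite -(extendsE chain_e).
rewrite (eq_bigl (fun t => (t \in [predU Zsub & Bsub]) && (\rank (extend t) <= r)%N)).
  have disjZB : [disjoint Zsub & Bsub].
    apply/pred0P => t /=; apply/andP => -[Zt /imsetP [z Zz def_t]].
    by move: (lastc_Zsub Zt); rewrite def_t lastc_shift // => /eqP; rewrite oner_eq0.
  rewrite big_mkcondr bigU //=.
  rewrite (eq_bigr (fun t => mu q s * h t)); last first.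
    by move=> t Zt; rewrite srk_extend_Zsub // /h; case: ifP; rewrite ?mulr0.
  rewrite [X in _ + X](eq_bigr (fun t => mu q s.+1 * h t)); last first.
    move=> _ /imsetP [z Zz ->].
    by rewrite srk_extend_shift // /h; case: ifP; rewrite ?mulr0.
  rewrite -!mulr_sumr (eq_bigr (fun z => h (shift z))); last first.
    by move=> z Zz; rewrite /h mxrank_extend_shift.
  rewrite sum_Zsub_shift card_fixedT -mulr_natr natz mulrCA.
  by rewrite [mu q s.+1 * _]mulrC -mulrDr mu_recurrence mulr0.
move=> t; rewrite (ce_extend chain_e) eqxx andbT.
rewrite Vsp_mul_extend andbT andbC; congr andb.
by apply/asboolP/pow_stationary_extendP => /semi_idempotent1P.
Qed.

End Counting.

Unset Implicit Arguments.

Theorem proposition3p4 (F : finFieldType) (n : nat) (hn : (0 < n)%N)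
  (AT : 'M[F]_n)
  (hT : semi_idempotent (@Vsp F n n.-1) AT)
  (himT : ~~ (@Vsp F n n.-1 *m AT <= @Vsp F n n.-1)%MS)
  (r : nat) (f : nat -> int) :
  \sum_(S : 'M[F]_n | [&& (\rank S <= r)%N
                       & @Vsp F n n.-1 *m S == @Vsp F n n.-1 *m AT]
                      && `[< semi_idempotent 1%:M S >])
     mu #|F| (srk S) * f (\rank S) = 0.
Proof.
case: n hn AT hT himT => // n' _ AT hT himT.
have [e [c0 chain_e]] := exists_max_chain hT himT.
exact: sum_extensions_eq0 hT chain_e r f.
Qed.
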